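(* Let $a,b,g,m,n>0$ and $0<e<1$, and consider the planar system $$\dot x=a-ex-\frac{xy}{1+gy},\qquad \dot y=\frac{xy}{1+gy}-y-\frac{my}{b+ny}.$$ Let $a_1=(eg+1)n$, $a_2=(b+m)(eg+1)+n(e-a)$, $a_3=e(b+m)-ab$, $\Delta=a_2^2-4a_1a_3$, $$a_4=\frac{[en-(b-m)(eg+1)]+\sqrt{4m(eg+1)[ne-b(eg+1)]}}{n},$$ $l=n(eg+g+1)$, $$s_1=(a_1a_3-a_2^2)nl+a_1a_2(en^2+2bl)-a_1^2\left(\frac{b^2l}{n}+2ben+bmg-mn\right),$$ $$s_2=(a_2^3-3a_1a_2a_3)nl+(2a_1^2a_3-a_1a_2^2)(en^2+2bl)+a_1^2a_2\left(\frac{b^2l}{n}+2ben+bmg-mn\right)-2a_1^3eb^2,$$ and $w=s_1\sqrt{\Delta}+s_2$. Suppose $n>\frac{(eg+1)b^2+m(eg+1)b}{me}$ and $a_4<a\le\frac{e(m+b)}{b}$. Let $y_1=\frac{-a_2+\sqrt{\Delta}}{2a_1}$ and $x_1=\frac{a(1+gy_1)}{e+(eg+1)y_1}$, so that $E_1=(x_1,y_1)$ is an endemic equilibrium of the system. Then: (1) if $w<0$, $E_1$ is a stable node or focus; (2) if $w=0$, $E_1$ is a weak center; (3) if $w>0$, $E_1$ is an unstable node or focus.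
   Context: The system is a rescaled SIR epidemic model with saturated infection rate and saturated treatment rate. A ''weak center'' means an equilibrium whose Jacobian has zero trace and positive determinant (purely imaginary eigenvalues). *)

From Stdlib Require Import Reals.
From Coquelicot Require Import Coquelicot.
Open Scope R_scope.

Definition sir_f1 (a e g : R) (x y : R) : R := a - e * x - x * y / (1 + g * y).
Definition sir_f2 (b g m n : R) (x y : R) : R :=
  x * y / (1 + g * y) - y - m * y / (b + n * y).

Definition jac11 (a e g : R) (x y : R) : R := Derive (fun u => sir_f1 a e g u y) x.
Definition jac12 (a e g : R) (x y : R) : R := Derive (fun v => sir_f1 a e g x v) y.
Definition jac21 (b g m n : R) (x y : R) : R := Derive (fun u => sir_f2 b g m n u y) x.
Definition jac22 (b g m n : R) (x y : R) : R := Derive (fun v => sir_f2 b g m n x v) y.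

Definition jac_trace (a b e g m n x y : R) : R :=
  jac11 a e g x y + jac22 b g m n x y.
Definition jac_det (a b e g m n x y : R) : R :=
  jac11 a e g x y * jac22 b g m n x y - jac12 a e g x y * jac21 b g m n x y.

(* Classification of an equilibrium (x,y) via its Jacobian J:
   stable node or focus  <-> both eigenvalues have negative real part, i.e. det J > 0, tr J < 0;
   unstable node or focus <-> both eigenvalues have positive real part, i.e. det J > 0, tr J > 0;
   weak center (as defined in the paper) <-> tr J = 0, det J > 0. *)
Definition is_equilibrium (a b e g m n x y : R) : Prop :=
  sir_f1 a e g x y = 0 /\ sir_f2 b g m n x y = 0.

Definition stable_node_or_focus (a b e g m n x y : R) : Prop :=
  is_equilibrium a b e g m n x y /\
  jac_det a b e g m n x y > 0 /\ jac_trace a b e g m n x y < 0.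
Definition unstable_node_or_focus (a b e g m n x y : R) : Prop :=
  is_equilibrium a b e g m n x y /\
  jac_det a b e g m n x y > 0 /\ jac_trace a b e g m n x y > 0.
Definition weak_center (a b e g m n x y : R) : Prop :=
  is_equilibrium a b e g m n x y /\
  jac_det a b e g m n x y > 0 /\ jac_trace a b e g m n x y = 0.

(* At an equilibrium with y > 0 the second equation reduces to the quadratic
   a1 y^2 + a2 y + a3 = 0, and the hypotheses make its discriminant positive and
   a2 negative, so E1 is an equilibrium with y1 > 0 and 2 a1 y1 + a2 = sqrt Delta.
   The Jacobian determinant at E1 is then y1 sqrt Delta / ((1 + g y1)(b + n y1)) > 0,
   and its trace is minus a cubic in y1 over a positive denominator.  Reducing that
   cubic modulo the quadratic and replacing 2 a1 y1 + a2 by sqrt Delta turns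
   -2 a1^3 times it into w, so the trace has the sign of w. *)
From Stdlib Require Import Reals Lra Psatz.
From Coquelicot Require Import Coquelicot.
Open Scope R_scope.

Lemma jac11_eq (a e g x y : R) : 1 + g * y <> 0 ->
  jac11 a e g x y = - e - y / (1 + g * y).
Proof.
  intro Hy; apply is_derive_unique; unfold sir_f1.
  auto_derive; [auto | field; exact Hy].
Qed.

Lemma jac12_eq (a e g x y : R) : 1 + g * y <> 0 ->
  jac12 a e g x y = - x / (1 + g * y) ^ 2.
Proof.
  intro Hy; apply is_derive_unique; unfold sir_f1.
  auto_derive; [auto | field; exact Hy].
Qed.

Lemma jac21_eq (b g m n x y : R) : 1 + g * y <> 0 ->
  jac21 b g m n x y = y / (1 + g * y).
Proof.
  intro Hy; apply is_derive_unique; unfold sir_f2.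
  auto_derive; [auto | field; exact Hy].
Qed.

Lemma jac22_eq (b g m n x y : R) : 1 + g * y <> 0 -> b + n * y <> 0 ->
  jac22 b g m n x y = x / (1 + g * y) ^ 2 - 1 - m * b / (b + n * y) ^ 2.
Proof.
  intros Hy Hby; apply is_derive_unique; unfold sir_f2.
  auto_derive; [auto | field; auto].
Qed.

Lemma classify_by_trace_sign (a b e g m n x y w d : R) :
  is_equilibrium a b e g m n x y -> jac_det a b e g m n x y > 0 ->
  0 < d -> jac_trace a b e g m n x y = w / d ->
  (w < 0 -> stable_node_or_focus a b e g m n x y) /\
  (w = 0 -> weak_center a b e g m n x y) /\
  (w > 0 -> unstable_node_or_focus a b e g m n x y).
Proof.
  intros Heq Hdet Hd Htr.
  split; [|split]; intro Hw; (split; [exact Heq | split; [exact Hdet | rewrite Htr]]).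
  - now apply Rdiv_neg_pos.
  - rewrite Hw; apply Rdiv_0_l.
  - now apply Rdiv_lt_0_compat.
Qed.

Lemma quadratic_root (p q r y : R) : p <> 0 -> 0 <= q ^ 2 - 4 * p * r ->
  2 * p * y + q = sqrt (q ^ 2 - 4 * p * r) -> p * y ^ 2 + q * y + r = 0.
Proof.
  intros Hp HD Hy.
  assert (Hsq : (2 * p * y + q) ^ 2 = q ^ 2 - 4 * p * r) by (rewrite Hy; now apply pow2_sqrt).
  apply (Rmult_eq_reg_l (4 * p)); [nra | lra].
Qed.

Lemma cubic_at_quadratic_root (a1 a2 a3 c3 c2 c1 c0 y : R) :
  a1 * y ^ 2 + a2 * y + a3 = 0 ->
  ((a1 * a3 - a2 ^ 2) * c3 + a1 * a2 * c2 - a1 ^ 2 * c1) * (2 * a1 * y + a2)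
  + ((a2 ^ 3 - 3 * a1 * a2 * a3) * c3 + (2 * a1 ^ 2 * a3 - a1 * a2 ^ 2) * c2
     + a1 ^ 2 * a2 * c1 - 2 * a1 ^ 3 * c0)
  = - 2 * a1 ^ 3 * (c3 * y ^ 3 + c2 * y ^ 2 + c1 * y + c0).
Proof.
  intro Hroot.
  apply Rminus_diag_uniq.
  transitivity ((a1 * y ^ 2 + a2 * y + a3)
                * (2 * a1 ^ 2 * c3 * y + 2 * a1 ^ 2 * c2 - 2 * a1 * a2 * c3)).
  - ring.
  - rewrite Hroot; ring.
Qed.

Lemma sqrt_threshold_gt (k b m n e : R) : 0 < b -> 0 < k -> 0 < m ->
  k * b ^ 2 + m * k * b < n * (m * e) -> 2 * k * b < sqrt (4 * m * k * (n * e - b * k)).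
Proof.
  intros Hb Hk Hm Hn.
  rewrite <- (sqrt_pow2 (2 * k * b)) by nra.
  apply sqrt_lt_1_alt; split; nra.
Qed.

Section EndemicEquilibrium.

Variables a b e g m n : R.
Hypotheses (Hb : 0 < b) (Hg : 0 < g) (Hm : 0 < m) (Hn : 0 < n) (He : 0 < e).

Local Notation k := (e * g + 1).
Local Notation a1 := ((e * g + 1) * n).
Local Notation a2 := ((b + m) * (e * g + 1) + n * (e - a)).
Local Notation a3 := (e * (b + m) - a * b).
Local Notation Delta := (a2 ^ 2 - 4 * a1 * a3).
Local Notation l := (n * (e * g + g + 1)).
Local Notation K := (b ^ 2 * l / n + 2 * b * e * n + b * m * g - m * n).
Local Notation s1 := ((a1 * a3 - a2 ^ 2) * n * l + a1 * a2 * (e * n ^ 2 + 2 * b * l)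
                      - a1 ^ 2 * K).
Local Notation s2 := ((a2 ^ 3 - 3 * a1 * a2 * a3) * n * l
                      + (2 * a1 ^ 2 * a3 - a1 * a2 ^ 2) * (e * n ^ 2 + 2 * b * l)
                      + a1 ^ 2 * a2 * K - 2 * a1 ^ 3 * e * b ^ 2).
Local Notation x_of y := (a * (1 + g * y) / (e + (e * g + 1) * y)).

Lemma endemic_discriminant_pos :
  ((e * g + 1) * b ^ 2 + m * (e * g + 1) * b) / (m * e) < n ->
  ((e * n - (b - m) * k) + sqrt (4 * m * k * (n * e - b * k))) / n < a ->
  0 < Delta /\ a2 < 0.
Proof.
  intros Hthr Ha4.
  assert (Hk : 0 < k) by nra.
  apply Rlt_div_l in Hthr; [|nra].
  apply Rlt_div_l in Ha4; [|lra].
  pose proof (sqrt_threshold_gt k b m n e Hb Hk Hm Hthr) as Hsq.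
  assert (Hne : 0 < n * e - b * k) by nra.
  set (q := 4 * m * k * (n * e - b * k)) in *.
  assert (Hq : sqrt q * sqrt q = q).
  { apply sqrt_sqrt; unfold q.
    apply Rlt_le, Rmult_lt_0_compat; [nra | exact Hne]. }
  (* d = n (a - a4) + sqrt q, so a4 < a gives d > sqrt q *)
  set (d := a * n - (e * n - (b - m) * k)).
  assert (HD : Delta = d ^ 2 - q) by (unfold d, q; ring).
  assert (Ha2 : a2 = 2 * k * b - d) by (unfold d; ring).
  assert (Hd : sqrt q < d) by (unfold d; lra).
  pose proof (sqrt_pos q).
  rewrite HD, Ha2; split; nra.
Qed.

Lemma endemic_denominators_pos y : 0 < y ->
  0 < 1 + g * y /\ 0 < b + n * y /\ 0 < e + k * y.
Proof.
  intro Hy.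
  assert (0 < e * g * y) by (repeat apply Rmult_lt_0_compat; assumption).
  repeat split; nra.
Qed.

Lemma endemic_a_eq y : 0 < y -> a1 * y ^ 2 + a2 * y + a3 = 0 ->
  a = (e + k * y) * (b + n * y + m) / (b + n * y).
Proof.
  intros Hy Hroot; destruct (endemic_denominators_pos y Hy) as (H1 & H2 & H3).
  field_simplify_eq; nra.
Qed.

Lemma endemic_is_equilibrium y : 0 < y -> a1 * y ^ 2 + a2 * y + a3 = 0 ->
  is_equilibrium a b e g m n (x_of y) y.
Proof.
  intros Hy Hroot; destruct (endemic_denominators_pos y Hy) as (H1 & H2 & H3).
  unfold is_equilibrium, sir_f1, sir_f2; split.
  - field; repeat split; lra.
  - rewrite (endemic_a_eq y Hy Hroot); field; repeat split; lra.
Qed.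

Lemma endemic_jac_det y : 0 < y -> a1 * y ^ 2 + a2 * y + a3 = 0 ->
  jac_det a b e g m n (x_of y) y
  = y * (2 * a1 * y + a2) / ((1 + g * y) * (b + n * y)).
Proof.
  intros Hy Hroot; destruct (endemic_denominators_pos y Hy) as (H1 & H2 & H3).
  unfold jac_det.
  rewrite jac11_eq, jac12_eq, jac21_eq, jac22_eq by lra.
  rewrite (endemic_a_eq y Hy Hroot); field; repeat split; lra.
Qed.

Lemma endemic_jac_trace_cubic y : 0 < y -> a1 * y ^ 2 + a2 * y + a3 = 0 ->
  jac_trace a b e g m n (x_of y) y
  = - (n * l * y ^ 3 + (e * n ^ 2 + 2 * b * l) * y ^ 2 + K * y + e * b ^ 2)
    / ((1 + g * y) * (b + n * y) ^ 2).
Proof.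
  intros Hy Hroot; destruct (endemic_denominators_pos y Hy) as (H1 & H2 & H3).
  unfold jac_trace.
  rewrite jac11_eq, jac22_eq by lra.
  rewrite (endemic_a_eq y Hy Hroot); field; repeat split; lra.
Qed.

Lemma endemic_jac_trace y : 0 < y -> a1 * y ^ 2 + a2 * y + a3 = 0 ->
  jac_trace a b e g m n (x_of y) y
  = (s1 * (2 * a1 * y + a2) + s2) / (2 * a1 ^ 3 * ((1 + g * y) * (b + n * y) ^ 2)).
Proof.
  intros Hy Hroot; destruct (endemic_denominators_pos y Hy) as (H1 & H2 & H3).
  assert (Hnum : s1 * (2 * a1 * y + a2) + s2
    = - 2 * a1 ^ 3 * (n * l * y ^ 3 + (e * n ^ 2 + 2 * b * l) * y ^ 2 + K * y + e * b ^ 2)).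
  { rewrite <- (cubic_at_quadratic_root _ _ _ _ _ _ _ _ Hroot); ring. }
  rewrite endemic_jac_trace_cubic, Hnum by assumption.
  field; repeat split; nra.
Qed.

End EndemicEquilibrium.

Theorem theorem2p4 (a b e g m n : R) :
  0 < a -> 0 < b -> 0 < g -> 0 < m -> 0 < n -> 0 < e -> e < 1 ->
  let a1 := (e * g + 1) * n in
  let a2 := (b + m) * (e * g + 1) + n * (e - a) in
  let a3 := e * (b + m) - a * b in
  let Delta := a2 ^ 2 - 4 * a1 * a3 in
  let a4 := ((e * n - (b - m) * (e * g + 1))
             + sqrt (4 * m * (e * g + 1) * (n * e - b * (e * g + 1)))) / n in
  let l := n * (e * g + g + 1) in
  let K := b ^ 2 * l / n + 2 * b * e * n + b * m * g - m * n in
  let s1 := (a1 * a3 - a2 ^ 2) * n * l + a1 * a2 * (e * n ^ 2 + 2 * b * l)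
            - a1 ^ 2 * K in
  let s2 := (a2 ^ 3 - 3 * a1 * a2 * a3) * n * l
            + (2 * a1 ^ 2 * a3 - a1 * a2 ^ 2) * (e * n ^ 2 + 2 * b * l)
            + a1 ^ 2 * a2 * K - 2 * a1 ^ 3 * e * b ^ 2 in
  let w := s1 * sqrt Delta + s2 in
  n > ((e * g + 1) * b ^ 2 + m * (e * g + 1) * b) / (m * e) ->
  a4 < a -> a <= e * (m + b) / b ->
  let y1 := (- a2 + sqrt Delta) / (2 * a1) in
  let x1 := a * (1 + g * y1) / (e + (e * g + 1) * y1) in
  (w < 0 -> stable_node_or_focus a b e g m n x1 y1) /\
  (w = 0 -> weak_center a b e g m n x1 y1) /\
  (w > 0 -> unstable_node_or_focus a b e g m n x1 y1).
Proof.
  intros Ha Hb Hg Hm Hn He _ a1 a2 a3 Delta a4 l K s1 s2 w Hthr Ha4 _ y1 x1.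
  destruct (endemic_discriminant_pos a b e g m n Hb Hg Hm Hn He Hthr Ha4
            : 0 < Delta /\ a2 < 0) as [HDelta Ha2].
  assert (Ha1 : 0 < a1) by (apply Rmult_lt_0_compat; nra).
  assert (Hsqrt : 0 < sqrt Delta) by now apply sqrt_lt_R0.
  assert (Hs : 2 * a1 * y1 + a2 = sqrt Delta).
  { unfold y1; field; lra. }
  assert (Hroot : a1 * y1 ^ 2 + a2 * y1 + a3 = 0).
  { apply quadratic_root; [apply Rgt_not_eq, Ha1 | apply Rlt_le, HDelta | exact Hs]. }
  assert (Hy : 0 < y1) by (unfold y1; apply Rdiv_lt_0_compat; lra).
  destruct (endemic_denominators_pos b e g n Hb Hg Hn He y1 Hy) as (H1 & H2 & _).
  apply (classify_by_trace_sign _ _ _ _ _ _ _ _ w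
           (2 * a1 ^ 3 * ((1 + g * y1) * (b + n * y1) ^ 2))).
  - exact (endemic_is_equilibrium a b e g m n Hb Hg Hn He y1 Hy Hroot).
  - unfold x1; rewrite (endemic_jac_det a b e g m n Hb Hg Hn He y1 Hy Hroot).
    fold a1 a2; rewrite Hs.
    apply Rdiv_lt_0_compat; apply Rmult_lt_0_compat; lra.
  - apply Rmult_lt_0_compat; [apply Rmult_lt_0_compat; [lra | apply pow_lt, Ha1] |
      apply Rmult_lt_0_compat; [exact H1 | apply pow_lt, H2]].
  - unfold x1, w; rewrite <- Hs.
    exact (endemic_jac_trace a b e g m n Hb Hg Hn He y1 Hy Hroot).
Qed.
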